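(* Let $T$ be a finite rooted tree with root $\rho$, vertex set $V$, arc set $A_T$ (arcs directed away from the root) and leaf set $X$. For $j=1,\dots,k$ let $\xi_j$ be a two-state Markov process on $T$ with state space $\{0,1\}$, root distribution $\pi^{(j)}_0,\pi^{(j)}_1>0$, and $2\times 2$ transition matrices $P^{(j)}(r,s)$ on the arcs $(r,s)\in A_T$, and suppose $\det P^{(j)}(r,s)\ge 0$ for every arc $(r,s)$ and every $j$. Suppose the $k$ processes are independent, and let $\boldsymbol{\xi}=(\xi_1,\dots,\xi_k)$ be the corresponding multivariate process with state space $\{0,1\}^k$. Fix a non-empty subset $W\subseteq X$, and for a function $\mathbf{u}\colon W\to\{0,1\}^k$ let $p(\mathbf{u})$ be the probability that $\boldsymbol{\xi}(v)=\mathbf{u}(v)$ for every $v\in W$. Then for any two functions $\mathbf{y},\mathbf{z}\colon W\to\{0,1\}^k$, $$p(\mathbf{y})\,p(\mathbf{z})\le p(\mathbf{y}\vee\mathbf{z})\,p(\mathbf{y}\wedge\mathbf{z}),$$ where $\mathbf{y}\vee\mathbf{z}$ and $\mathbf{y}\wedge\mathbf{z}$ are the functions $W\to\{0,1\}^k$ given coordinatewise by $(\mathbf{y}\vee\mathbf{z})_j(v)=\max\{y_j(v),z_j(v)\}$ and $(\mathbf{y}\wedge\mathbf{z})_j(v)=\min\{y_j(v),z_j(v)\}$ for $v\in W$, $j=1,\dots,k$.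
   Context: A two-state Markov process on a rooted tree $T$ assigns a random state $\xi(v)\in\{0,1\}$ to each vertex: $\xi(\rho)=i$ with probability $\pi_i$, and for each arc $(r,s)$ the entry $P(r,s)_{il}$ is the conditional probability that $\xi(s)=l$ given $\xi(r)=i$, the states being generated along the arcs with the Markov property (so the probability of a full assignment $U\colon V\to\{0,1\}$ is $\pi_{U(\rho)}\prod_{(r,s)\in A_T}P(r,s)_{U(r)U(s)}$). The multivariate process $\boldsymbol{\xi}$ assigns to each vertex $v$ the vector $(\xi_1(v),\dots,\xi_k(v))$; its root distribution is $\pi_{\mathbf{i}}=\prod_j\pi^{(j)}_{i_j}$ and its transition probabilities are $\prod_j P^{(j)}(r,s)_{i_jl_j}$. The processes need not be identical, and different arcs may carry different transition matrices. *)

From HB Require Import structures.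
From mathcomp Require Import all_boot all_order all_algebra.
Set Implicit Arguments. Unset Strict Implicit. Unset Printing Implicit Defensive.
Import Order.TTheory GRing.Theory Num.Theory.
Local Open Scope ring_scope.

(* Finite rooted trees: vertices 'I_n.+1, root ord0, each non-root vertex v
   has a parent [par v] with par v < v.  Arcs are (par v, v), v != ord0.   *)
Definition is_parent_fun (n : nat) (par : 'I_n.+1 -> 'I_n.+1) : Prop :=
  forall v : 'I_n.+1, v != ord0 -> (par v < v)%N.

Definition is_leaf (n : nat) (par : 'I_n.+1 -> 'I_n.+1) (v : 'I_n.+1) : bool :=
  [forall w : 'I_n.+1, (w != ord0) ==> (par w != v)].

Definition stochastic (R : realFieldType) (M : 'M[R]_2) : Prop :=
  (forall i l, 0 <= M i l) /\ (forall i, \sum_(l < 2) M i l = 1).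

Definition mstate (k : nat) := {ffun 'I_k -> 'I_2}.

Definition mroot (R : realFieldType) (k : nat) (pi : 'I_k -> 'I_2 -> R)
  (s : mstate k) : R := \prod_(j < k) pi j (s j).

Definition mtrans (R : realFieldType) (k n : nat)
  (P : 'I_k -> 'I_n.+1 -> 'M[R]_2) (v : 'I_n.+1) (s t : mstate k) : R :=
  \prod_(j < k) P j v (s j) (t j).

(* Probability of a full assignment U : V -> {0,1}^k of the multivariate
   process; P j v is the transition matrix of process j on the arc (par v, v). *)
Definition full_prob (R : realFieldType) (k n : nat)
  (par : 'I_n.+1 -> 'I_n.+1) (pi : 'I_k -> 'I_2 -> R)
  (P : 'I_k -> 'I_n.+1 -> 'M[R]_2) (U : {ffun 'I_n.+1 -> mstate k}) : R :=
  mroot pi (U ord0) * \prod_(v < n.+1 | v != ord0) mtrans P v (U (par v)) (U v).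

(* p(u): probability that xi(v) = u(v) for every v in W (only the values of u
   on W matter). *)
Definition marg_prob (R : realFieldType) (k n : nat)
  (par : 'I_n.+1 -> 'I_n.+1) (pi : 'I_k -> 'I_2 -> R)
  (P : 'I_k -> 'I_n.+1 -> 'M[R]_2) (W : {set 'I_n.+1})
  (u : {ffun 'I_n.+1 -> mstate k}) : R :=
  \sum_(U : {ffun 'I_n.+1 -> mstate k} | [forall v in W, U v == u v])
     full_prob par pi P U.

Definition max2 (a b : 'I_2) : 'I_2 := if (a <= b)%N then b else a.
Definition min2 (a b : 'I_2) : 'I_2 := if (a <= b)%N then a else b.

Definition fjoin (k n : nat) (y z : {ffun 'I_n.+1 -> mstate k})
  : {ffun 'I_n.+1 -> mstate k} :=
  [ffun v => [ffun j => max2 (y v j) (z v j)]].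
Definition fmeet (k n : nat) (y z : {ffun 'I_n.+1 -> mstate k})
  : {ffun 'I_n.+1 -> mstate k} :=
  [ffun v => [ffun j => min2 (y v j) (z v j)]].

From HB Require Import structures.
From mathcomp Require Import all_boot all_order all_algebra.
From mathcomp Require Import ring lra.
Import Order.TTheory GRing.Theory Num.Theory.
Set Implicit Arguments.
Unset Strict Implicit.
Local Open Scope ring_scope.

(* The joint law of all coordinates (xi_j(v))_{v,j}, viewed as a function on
   the distributive lattice {0,1}^(V x k), is MTP2: it is a product of factors
   each depending on one coordinate (the root law) or on two (a transition
   matrix, which is TP2 exactly because its determinant is nonnegative), and
   products of MTP2 functions are MTP2.  Summing out a single binary coordinate
   preserves MTP2 by the four-function inequality on the two-point lattice;
   summing out, one at a time, every coordinate outside W gives the claim. *)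

Lemma two_point_four_functions (R : realFieldType) (a b c d A B C D : R) :
  0 <= a -> 0 <= b -> 0 <= c -> 0 <= d -> 0 <= A -> 0 <= B -> 0 <= C -> 0 <= D ->
  a * c <= A * C -> b * d <= B * D -> a * d <= B * C -> b * c <= B * C ->
  (a + b) * (c + d) <= (A + B) * (C + D).
Proof.
move=> a0 b0 c0 d0 A0 B0 C0 D0 ac bd ad bc.
have cross_prod : (a * d) * (b * c) <= (A * D) * (B * C).
  have -> : (a * d) * (b * c) = (a * c) * (b * d) by ring.
  have -> : (A * D) * (B * C) = (A * C) * (B * D) by ring.
  by apply: ler_pM => //; apply: mulr_ge0.
(* With M = B C, (M - a d)(M - b c) >= 0 bounds M (a d + b c) by M^2 + M (A D). *)
have cross_sum : a * d + b * c <= B * C + A * D.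
  have : 0 <= (B * C - a * d) * (B * C - b * c) by rewrite mulr_ge0 ?subr_ge0.
  have [BC0|BC_neq0] := eqVneq (B * C) 0; first by rewrite BC0 in ad bc *; nra.
  have BC_gt0 : 0 < B * C by rewrite lt_def BC_neq0 mulr_ge0.
  by rewrite -(ler_pM2l BC_gt0); nra.
nra.
Qed.

Lemma det_mx2 (R : comNzRingType) (M : 'M[R]_2) :
  \det M = M ord0 ord0 * M ord_max ord_max - M ord0 ord_max * M ord_max ord0.
Proof.
rewrite (expand_det_row _ ord0) !big_ord_recl big_ord0 /cofactor.
rewrite !det_mx11 /= !mxE /=.
have lift0 (i : 'I_1) : lift ord0 i = ord_max :> 'I_2.
  by apply/val_inj; rewrite /= (ord1 i).
have lift1 : lift (lift ord0 ord0) (0 : 'I_1) = ord0 :> 'I_2 by apply/val_inj.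
rewrite lift1 !lift0 /= expr0 expr1; ring.
Qed.

Lemma ord2_cases (x : 'I_2) : x = ord0 \/ x = ord_max.
Proof. by case: x => [[|[|]]] // p; [left|right]; apply/val_inj. Qed.

Lemma ord2_neq0 (x : 'I_2) : (x != ord0) = (x == ord_max).
Proof. by case: (ord2_cases x) => ->. Qed.

Lemma tp2_det_ge0 (R : realFieldType) (M : 'M[R]_2) (a1 a2 b1 b2 : 'I_2) :
  0 <= \det M ->
  M a1 b1 * M a2 b2 <= M (max2 a1 a2) (max2 b1 b2) * M (min2 a1 a2) (min2 b1 b2).
Proof.
rewrite det_mx2 subr_ge0 => hdet.
by case: (ord2_cases a1) => ->; case: (ord2_cases a2) => ->;
   case: (ord2_cases b1) => ->; case: (ord2_cases b2) => ->;
   rewrite /max2 /min2 /=; lra.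
Qed.

Section MTP2.
Variables (R : realFieldType) (n k : nat).
Notation L := {ffun 'I_n.+1 -> mstate k}.
Notation coord := ('I_n.+1 * 'I_k)%type.

Definition mtp2 (f : L -> R) :=
  (forall x, 0 <= f x) /\
  (forall x y, f x * f y <= f (fjoin x y) * f (fmeet x y)).

Lemma mtp2M f g : mtp2 f -> mtp2 g -> mtp2 (fun x => f x * g x).
Proof.
move=> [f0 fi] [g0 gi]; split=> [x|x y]; first exact: mulr_ge0.
rewrite mulrACA [X in _ <= X]mulrACA.
by apply: ler_pM; rewrite ?mulr_ge0.
Qed.

Lemma mtp2_prod (I : finType) (Pr : pred I) (F : I -> L -> R) :
  (forall i, Pr i -> mtp2 (F i)) -> mtp2 (fun x => \prod_(i | Pr i) F i x).
Proof.
move=> FP; split=> [x|x y]; first by apply: prodr_ge0 => i /FP [].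
rewrite -!big_split /=; apply: ler_prod => i /FP [F0 Fi].
by rewrite mulr_ge0 ?Fi.
Qed.

Lemma fjoinE (x y : L) v j : fjoin x y v j = max2 (x v j) (y v j).
Proof. by rewrite !ffunE. Qed.

Lemma fmeetE (x y : L) v j : fmeet x y v j = min2 (x v j) (y v j).
Proof. by rewrite !ffunE. Qed.

Lemma mtp2_coord (phi : 'I_2 -> R) v j : (forall i, 0 <= phi i) ->
  mtp2 (fun x => phi (x v j)).
Proof.
move=> phi0; split=> // x y; rewrite fjoinE fmeetE /max2 /min2.
by case: ifP; rewrite // mulrC.
Qed.

Lemma mtp2_coord_pair (M : 'M[R]_2) v1 j1 v2 j2 :
  (forall i l, 0 <= M i l) -> 0 <= \det M ->
  mtp2 (fun x => M (x v1 j1) (x v2 j2)).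
Proof. by move=> M0 hdet; split=> // x y; rewrite !fjoinE !fmeetE tp2_det_ge0. Qed.

Definition set_coord (u : L) (c : coord) (i : 'I_2) : L :=
  [ffun v => [ffun j => if (v, j) == c then i else u v j]].

Lemma fjoin_set_coord x y c i l :
  fjoin (set_coord x c i) (set_coord y c l) = set_coord (fjoin x y) c (max2 i l).
Proof. by apply/ffunP => v; apply/ffunP => j; rewrite !ffunE; case: ifP. Qed.

Lemma fmeet_set_coord x y c i l :
  fmeet (set_coord x c i) (set_coord y c l) = set_coord (fmeet x y) c (min2 i l).
Proof. by apply/ffunP => v; apply/ffunP => j; rewrite !ffunE; case: ifP. Qed.

Lemma mtp2_sum_coord c h : mtp2 h ->
  mtp2 (fun u => h (set_coord u c ord0) + h (set_coord u c ord_max)).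
Proof.
move=> [h0 hi]; split=> [x|x y]; first exact: addr_ge0.
have hi_set i l : h (set_coord x c i) * h (set_coord y c l) <=
    h (set_coord (fjoin x y) c (max2 i l)) * h (set_coord (fmeet x y) c (min2 i l)).
  by rewrite -fjoin_set_coord -fmeet_set_coord.
by apply: two_point_four_functions; rewrite ?h0.
Qed.

Fixpoint sum_coords (h : L -> R) (cs : seq coord) (u : L) : R :=
  if cs is c :: cs' then
    sum_coords h cs' (set_coord u c ord0) + sum_coords h cs' (set_coord u c ord_max)
  else h u.

Lemma mtp2_sum_coords h cs : mtp2 h -> mtp2 (sum_coords h cs).
Proof. by move=> hP; elim: cs => [|c cs IH] //=; apply: (mtp2_sum_coord c IH). Qed.

Definition agree_off (cs : seq coord) (u U : L) : bool :=
  [forall c : coord, (c \notin cs) ==> (U c.1 c.2 == u c.1 c.2)].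

Lemma agree_off_cons c cs u i U : c \notin cs ->
  agree_off (c :: cs) u U && (U c.1 c.2 == i) = agree_off cs (set_coord u c i) U.
Proof.
move=> c_cs; apply/idP/idP.
- move=> /andP[/forallP Uu /eqP Uc]; apply/forallP => -[v j]; apply/implyP => /= vj_cs.
  rewrite !ffunE; case: ((v, j) =P c) => [vj_c|vj_c]; first by rewrite -vj_c in Uc; rewrite Uc.
  by have := Uu (v, j); rewrite inE negb_or vj_cs andbT (introN eqP vj_c).
- move/forallP => Uu; apply/andP; split.
    apply/forallP => -[v j]; apply/implyP; rewrite inE negb_or => /andP[vj_c vj_cs].
    by have := Uu (v, j); rewrite vj_cs /= !ffunE (negbTE vj_c).
  by have := Uu c; rewrite c_cs !ffunE -surjective_pairing eqxx.
Qed.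

Lemma sum_coordsE h cs u : uniq cs ->
  sum_coords h cs u = \sum_(U | agree_off cs u U) h U.
Proof.
elim: cs u => [|c cs IH] u /=.
  move=> _; rewrite (big_pred1 u) // => U; apply/forallP/eqP => [Uu|-> c]; last by rewrite eqxx implybT.
  by apply/ffunP => v; apply/ffunP => j; apply/eqP; exact: (Uu (v, j)).
move=> /andP[c_cs cs_uniq].
rewrite (bigID (fun U : L => U c.1 c.2 == ord0)) /= !IH //.
by congr (_ + _); apply: eq_bigl => U; rewrite ?ord2_neq0 agree_off_cons.
Qed.

End MTP2.

Lemma full_prob_mtp2 (R : realFieldType) (n k : nat)
  (par : 'I_n.+1 -> 'I_n.+1) (pi : 'I_k -> 'I_2 -> R)
  (P : 'I_k -> 'I_n.+1 -> 'M[R]_2) :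
  (forall j i, 0 <= pi j i) ->
  (forall j (v : 'I_n.+1), v != ord0 -> forall i l, 0 <= P j v i l) ->
  (forall j (v : 'I_n.+1), v != ord0 -> 0 <= \det (P j v)) ->
  mtp2 (full_prob par pi P).
Proof.
move=> pi0 P0 hdet; apply: mtp2M.
  by apply: mtp2_prod => j _; apply: mtp2_coord.
apply: mtp2_prod => v v0; apply: mtp2_prod => j _.
by apply: mtp2_coord_pair; [apply: P0 | apply: hdet].
Qed.

Lemma marg_prob_sum_coords (R : realFieldType) (n k : nat)
  (par : 'I_n.+1 -> 'I_n.+1) (pi : 'I_k -> 'I_2 -> R)
  (P : 'I_k -> 'I_n.+1 -> 'M[R]_2) (W : {set 'I_n.+1}) u :
  marg_prob par pi P W u =
  sum_coords (full_prob par pi P) (enum [pred c : 'I_n.+1 * 'I_k | c.1 \notin W]) u.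
Proof.
rewrite sum_coordsE ?enum_uniq //; apply: eq_bigl => U.
apply/forallP/forallP => Uu.
  move=> [v j]; apply/implyP; rewrite mem_enum inE negbK /= => vW.
  by have /implyP/(_ vW)/eqP -> := Uu v.
move=> v; apply/implyP => vW; apply/eqP/ffunP => j; apply/eqP.
by have := Uu (v, j); rewrite mem_enum inE negbK /= vW.
Qed.

Theorem proposition2p1 (R : realFieldType) (n k : nat)
  (par : 'I_n.+1 -> 'I_n.+1) (pi : 'I_k -> 'I_2 -> R)
  (P : 'I_k -> 'I_n.+1 -> 'M[R]_2) (W : {set 'I_n.+1})
  (y z : {ffun 'I_n.+1 -> mstate k}) :
  is_parent_fun par ->
  (forall j i, 0 < pi j i) ->
  (forall j, \sum_(i < 2) pi j i = 1) ->
  (forall j (v : 'I_n.+1), v != ord0 -> stochastic (P j v)) ->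
  (forall j (v : 'I_n.+1), v != ord0 -> 0 <= \det (P j v)) ->
  W != set0 ->
  (forall v, v \in W -> is_leaf par v) ->
  marg_prob par pi P W y * marg_prob par pi P W z <=
    marg_prob par pi P W (fjoin y z) * marg_prob par pi P W (fmeet y z).
Proof.
move=> _ pi_gt0 _ P_stoch hdet _ _.
have P0 j v (v0 : v != ord0) : forall i l, 0 <= P j v i l by case: (P_stoch j v v0).
have full_mtp2 := full_prob_mtp2 par (fun j i => ltW (pi_gt0 j i)) P0 hdet.
by rewrite !marg_prob_sum_coords; apply: (mtp2_sum_coords _ full_mtp2).2.
Qed.
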